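(* Let $l$ be a prime and $(\mathcal{G}_n)_{n\in\mathbb{N}}$ a sequence of finite $l$-groups with $\mathcal{G}_n\le S_{l^n}$ and $\mathcal{G}_n\le\mathcal{G}_{n+1}$ for all $n$ (inside $S_\infty$, where $S_{l^n}$ is the subgroup fixing every integer $>l^n$). Let $\alpha\in\mathcal{G}_k$ be an element of order $l$ for some $k$, and $\mathcal{H}=\langle\alpha\rangle$. Let $d_n$ be the maximal order of a metacyclic subgroup of $\mathcal{G}_n$. Assume (1) $\lim_{n\to\infty}|\mathcal{G}_n|/d_n=\infty$, and (2) $\alpha$ has infinitely many conjugates in $\bigcup_{n}\mathcal{G}_n$. Then there is $N$ such that for every $n\ge N$ and every metacyclic subgroup $D\le\mathcal{G}_n$ one has $S(D,\mathcal{H})>1$, double cosets being taken in $\mathcal{G}_n$.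
   Context: $S_\infty$ is the group of permutations of $\mathbb{N}$ fixing all but finitely many elements. A group is metacyclic if it has a cyclic normal subgroup with cyclic quotient. For subgroups $A,B$ of a finite group $\mathcal{G}$, a double coset $AxB$ ($x\in\mathcal{G}$) is split if $|AxB|=|A||B|$ (equivalently $x^{-1}Ax\cap B=1$), and $S(A,B)$ denotes the number of distinct split double cosets. *)

From mathcomp Require Import all_boot all_fingroup all_solvable.
Set Implicit Arguments. Unset Strict Implicit. Unset Printing Implicit Defensive.
Local Open Scope group_scope.

(* S_m viewed inside S_infinity: a permutation of 'I_m acts on nat,
   fixing every integer >= m (0-based indexing of {1,...,m}). *)
Definition sinf (m : nat) (s : {perm 'I_m}) : nat -> nat :=
  fun x => if @insub nat (fun y => y < m) 'I_m x is Some i then val (s i) else x.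

Definition split_dcosets (gT : finGroupType) (G A B : {set gT}) : {set {set gT}} :=
  [set A :* x * B | x in G & #|A :* x * B| == (#|A| * #|B|)%N].
Definition S_split (gT : finGroupType) (G A B : {set gT}) : nat :=
  #|split_dcosets G A B|.

Definition max_metacyclic (gT : finGroupType) (G : {set gT}) : nat :=
  \max_(D : {group gT} | (D \subset G) && metacyclic D) #|D|.

Definition is_conj_in_union (l k : nat) (G : forall n, {group {perm 'I_(l ^ n)}})
  (alpha : {perm 'I_(l ^ k)}) (f : nat -> nat) : Prop :=
  exists n (a g : {perm 'I_(l ^ n)}),
    [/\ a \in G n, g \in G n, sinf a =1 sinf alpha & f =1 sinf (a ^ g)].

Definition infinitely_many_conj (l k : nat) (G : forall n, {group {perm 'I_(l ^ n)}})
  (alpha : {perm 'I_(l ^ k)}) : Prop :=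
  forall m : nat, exists fs : seq (nat -> nat),
    [/\ size fs = m,
        forall i, i < m -> is_conj_in_union G alpha (nth id fs i) &
        forall i j, i < m -> j < m -> i <> j ->
          ~ (nth id fs i =1 nth id fs j)].

From mathcomp Require Import all_boot all_fingroup all_solvable.
Set Implicit Arguments. Unset Strict Implicit. Unset Printing Implicit Defensive.
From Stdlib Require Import ClassicalEpsilon.
Local Open Scope group_scope.

(* If S(D, <[a]>) <= 1, then all x with a \notin D^x lie in one double
   coset, so fewer than #|D| l elements x fail to conjugate a given conjugate
   of a into D.  By a union bound (using #|G_n| >> #|D|), any small set W of
   conjugates of a lies in a single conjugate D^x0 = K.Q (K cyclic normal,
   Q cyclic).  Elements of order l map into 'Ohm_1(Q), of order <= l, so
   #|W| <= #|K| l, and among l+1 of them two lie in one coset of K.  Condition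
   (2) supplies l+1 conjugates supported in a fixed S_(l^m0); the quotient of
   two of them is a nontrivial element of the cyclic l-group K, which must
   move at least #|K| points, whence #|K| <= l^m0.  Taking also
   l^m0 l + 1 further conjugates in W gives a contradiction. *)

Lemma sinf_ord m (s : {perm 'I_m}) (i : 'I_m) : sinf s i = s i.
Proof. by rewrite /sinf valK. Qed.

Lemma sinf_out m (s : {perm 'I_m}) x : (m <= x)%N -> sinf s x = x.
Proof. by move=> h; rewrite /sinf insubF // ltnNge h. Qed.

Lemma sinfM m (s t : {perm 'I_m}) x : sinf (s * t) x = sinf t (sinf s x).
Proof.
case: (ltnP x m) => h; last by rewrite !sinf_out.
by rewrite -[x]/(nat_of_ord (Ordinal h)) !sinf_ord permM.
Qed.

Lemma sinf1 m x : sinf (1 : {perm 'I_m}) x = x.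
Proof.
case: (ltnP x m) => h; last by rewrite sinf_out.
by rewrite -[x]/(nat_of_ord (Ordinal h)) sinf_ord perm1.
Qed.

Lemma sinf_inj m (s t : {perm 'I_m}) : sinf s =1 sinf t -> s = t.
Proof. by move=> e; apply/permP => i; apply: val_inj; rewrite /= -!sinf_ord e. Qed.

Section Transport.
Variables m1 m2 : nat.
Implicit Types (s t : {perm 'I_m1}) (u v : {perm 'I_m2}).

Lemma sinfV_eq s u : sinf s =1 sinf u -> sinf s^-1 =1 sinf u^-1.
Proof.
move=> e q; have hq : sinf u (sinf u^-1 q) = q by rewrite -sinfM mulVg sinf1.
by rewrite -{1}hq -e -sinfM mulgV sinf1.
Qed.

Lemma sinfM_eq s t u v :
  sinf s =1 sinf u -> sinf t =1 sinf v -> sinf (s * t) =1 sinf (u * v).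
Proof. by move=> e1 e2 q; rewrite !sinfM e1 e2. Qed.

Lemma sinfJ_eq s t u v :
  sinf s =1 sinf u -> sinf t =1 sinf v -> sinf (s ^ t) =1 sinf (u ^ v).
Proof. by move=> e1 e2; rewrite !conjgE; apply/sinfM_eq/sinfM_eq/e2 => //; apply: sinfV_eq. Qed.

Lemma sinfX_eq s u i : sinf s =1 sinf u -> sinf (s ^+ i) =1 sinf (u ^+ i).
Proof.
move=> e; elim: i => [|i IH]; first by move=> q; rewrite !expg0 !sinf1.
by rewrite !expgS; apply: sinfM_eq.
Qed.

Lemma sinf_order s u : sinf s =1 sinf u -> #[s] = #[u].
Proof.
move=> e; have same_exp i : (s ^+ i == 1) = (u ^+ i == 1).
  apply/eqP/eqP => h; apply: sinf_inj => q; rewrite sinf1.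
    by rewrite -(sinfX_eq i e) h sinf1.
  by rewrite (sinfX_eq i e) h sinf1.
apply/eqP; rewrite eqn_dvd !order_dvdn.
by apply/andP; split; [rewrite same_exp | rewrite -same_exp]; rewrite expg_order.
Qed.
End Transport.

Definition supported_below (N M : nat) (y : {perm 'I_N}) : Prop :=
  forall i : 'I_N, (M <= i)%N -> y i = i.

Section NestedFamily.
Variables (l : nat) (G : forall n : nat, {group {perm 'I_(l ^ n)}}).
Hypothesis l_gt0 : (0 < l)%N.
Hypothesis G_nested : forall n (s : {perm 'I_(l ^ n)}), s \in G n ->
  exists2 t : {perm 'I_(l ^ n.+1)}, t \in G n.+1 & sinf t =1 sinf s.

Lemma lift_to_level n0 n : (n0 <= n)%N -> forall s : {perm 'I_(l ^ n0)}, s \in G n0 ->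
  exists2 t : {perm 'I_(l ^ n)}, t \in G n & sinf t =1 sinf s.
Proof.
elim: n => [|n IH]; first by rewrite leqn0 => /eqP-> s sG; exists s.
rewrite leq_eqVlt => /orP[/eqP-> s sG | lt_n0n s sG]; first by exists s.
have [t tG et] := IH lt_n0n s sG; have [t' t'G et'] := G_nested tG.
by exists t' => // q; rewrite et' et.
Qed.

Lemma conj_at_level k (alpha : {perm 'I_(l ^ k)}) n1 n (a1 g1 : {perm 'I_(l ^ n1)})
    (a : {perm 'I_(l ^ n)}) :
  (n1 <= n)%N -> g1 \in G n1 -> sinf a1 =1 sinf alpha -> sinf a =1 sinf alpha ->
  exists b, [/\ b \in a ^: G n, sinf b =1 sinf (a1 ^ g1) & supported_below (l ^ n1) b].
Proof.
move=> le_n1n g1G ea1 ea; have [t tG et] := lift_to_level le_n1n g1G.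
have eb : sinf (a ^ t) =1 sinf (a1 ^ g1) by apply: sinfJ_eq => // q; rewrite ea ea1.
exists (a ^ t); split=> [|//|j le_j]; first exact: memJ_class.
by apply: val_inj; rewrite /= -sinf_ord eb sinf_out.
Qed.

Lemma many_small_conjugates k (alpha : {perm 'I_(l ^ k)}) :
  infinitely_many_conj G alpha -> forall m, exists m0, forall n, (m0 <= n)%N ->
  forall a : {perm 'I_(l ^ n)}, sinf a =1 sinf alpha ->
  exists Y : {set {perm 'I_(l ^ n)}}, [/\ #|Y| = m, Y \subset a ^: G n &
     {in Y, forall y, supported_below (l ^ m0) y}].
Proof.
move=> hinf m; have [fs [_ fs_conj fs_uniq]] := hinf m.
have [lev levP] := choice _ (fun i : 'I_m => fs_conj i (ltn_ord i)).
exists (\max_(i < m) lev i) => n le_n a ea.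
have b_ex (i : 'I_m) : exists bi : {perm 'I_(l ^ n)},
    [/\ bi \in a ^: G n, sinf bi =1 nth id fs i &
        supported_below (l ^ \max_(i < m) lev i) bi].
  have le_i : (lev i <= \max_(i < m) lev i)%N := leq_bigmax i.
  have [a1 [g1 [_ g1G ea1 ef]]] := levP i.
  have [b [bC eb sb]] := conj_at_level (leq_trans le_i le_n) g1G ea1 ea.
  exists b; split=> [//|q|j le_j]; first by rewrite eb ef.
  by apply: sb; apply: leq_trans le_j; rewrite leq_pexp2l.
have [b bP] := choice _ b_ex.
exists (b @: 'I_m); split.
- rewrite card_imset ?card_ord // => i j bij; apply/eqP/contraT => ne_ij.
  have [_ ei _] := bP i; have [_ ej _] := bP j.
  case: (fs_uniq i j (ltn_ord i) (ltn_ord j)) => [|q]; last by rewrite -ei -ej bij.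
  by apply/eqP; rewrite val_eqE.
- by apply/subsetP => y /imsetP[i _ ->]; have [] := bP i.
- by move=> y /imsetP[i _ ->]; have [] := bP i.
Qed.
End NestedFamily.

Lemma split_dcoset_card (gT : finGroupType) (D : {group gT}) (a x : gT) :
  prime #[a] -> a \notin D :^ x -> #|D :* x * <[a]>| = (#|D| * #[a])%N.
Proof.
move=> pr_a aDx.
have -> : D :* x * <[a]> = x *: (D :^ x * <[a]>) by rewrite conjsgE mulgA lcosetKV.
rewrite card_lcoset orderE -(cardJg D x).
have := mul_cardG (D :^ x)%G <[a]>%G.
by rewrite setIC prime_TIg ?cycle_subG -?orderE // cards1 muln1.
Qed.

(* If at most one double coset splits, all x with a \notin D :^ x lie in a
   single double coset, hence there are at most #|D| * #[a] of them. *)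
Lemma card_split_reps (gT : finGroupType) (Gn D : {group gT}) (a : gT) :
  prime #[a] -> (S_split Gn D <[a]> <= 1)%N ->
  (#|[set x in Gn | a \notin D :^ x]| <= #|D| * #[a])%N.
Proof.
move=> pr_a split_le1; set T := [set x in Gn | _].
have [-> | [x0 x0T]] := set_0Vmem T; first by rewrite cards0.
have splitT x : x \in T -> D :* x * <[a]> \in split_dcosets Gn D <[a]>.
  rewrite inE => /andP[xG aDx]; apply/imsetP; exists x => //.
  by rewrite inE xG split_dcoset_card // -orderE eqxx.
have sub_T : T \subset D :* x0 * <[a]>.
  apply/subsetP => x xT.
  have <- : D :* x * <[a]> = D :* x0 * <[a]> by apply: (card_le1_eqP split_le1); apply: splitT.
  by rewrite -{1}[x]mulg1 mem_mulg ?rcoset_refl.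
move: x0T; rewrite inE => /andP[_ aDx0].
by rewrite -(split_dcoset_card pr_a aDx0) subset_leq_card.
Qed.

Lemma card_bigcup_le (T I : finType) (P : {pred I}) (F : I -> {set T}) :
  (#|\bigcup_(i in P) F i| <= \sum_(i in P) #|F i|)%N.
Proof.
elim/big_rec2: _ => [|i n U _ le_U]; first by rewrite cards0.
by apply: leq_trans (leq_card_setU _ _) _; rewrite leq_add2l.
Qed.

Lemma common_conjugate (gT : finGroupType) (Gn D : {group gT}) (a : gT)
    (W : {set gT}) :
  prime #[a] -> (S_split Gn D <[a]> <= 1)%N -> W \subset a ^: Gn ->
  (#|W| * (#|D| * #[a]) < #|Gn|)%N ->
  exists2 x0, x0 \in Gn & W \subset D :^ x0.
Proof.
move=> pr_a split_le1 sW small_W.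
pose bad b := [set x in Gn | b \notin D :^ x].
have card_bad b : b \in W -> (#|bad b| <= #|D| * #[a])%N.
  move=> bW; have /imsetP[t tG ->] := subsetP sW b bW.
  apply: leq_trans (card_split_reps pr_a split_le1).
  rewrite -(card_rcoset [set x in Gn | a \notin D :^ x] t).
  apply/subset_leq_card/subsetP => x; rewrite inE => /andP[xG aDx].
  rewrite mem_rcoset inE groupM ?groupV //=.
  by apply: contra aDx => aDxt; rewrite -(mulgVK t x) conjsgM memJ_conjg.
have card_U : (#|\bigcup_(b in W) bad b| < #|Gn|)%N.
  apply: leq_ltn_trans (card_bigcup_le _ _) (leq_ltn_trans _ small_W).
  by rewrite -sum_nat_const leq_sum.
have [x0 x0G x0U] : exists2 x0, x0 \in Gn & x0 \notin \bigcup_(b in W) bad b.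
  by apply/subsetPn; apply: contraTN card_U => /subset_leq_card; rewrite -leqNgt.
exists x0 => //; apply/subsetP => b bW; apply: contraR x0U => bDx0.
by apply/bigcupP; exists b; rewrite // inE x0G.
Qed.

Lemma cycle_fix (T : finType) (v y : {perm T}) (q : T) :
  v q = q -> y \in <[v]> -> y q = q.
Proof. by move=> vq /cycleP[i ->]; rewrite permX iter_fix. Qed.

Lemma perm_moves (T : finType) (u : {perm T}) : u != 1 -> exists q, u q != q.
Proof.
move=> u1; apply/existsP; apply: contraR u1 => /existsPn fixu.
by apply/eqP/permP => q; rewrite perm1; apply/eqP/negPn.
Qed.

Lemma Ohm1_sub_cycle (gT : finGroupType) (p : nat) (C : {group gT}) (x : gT) :
  cyclic C -> p.-group C -> x \in C -> x != 1 -> 'Ohm_1(C) \subset <[x]>.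
Proof.
move=> cC pC xC x1; have sxC : <[x]> \subset C by rewrite cycle_subG.
have ntC : C :!=: 1 by apply/trivgPn; exists x.
have ntx : <[x]> :!=: 1 by rewrite cycle_eq1.
have <- : 'Ohm_1(<[x]>) = 'Ohm_1(C).
  apply/eqP; rewrite eqEcard OhmS //= (Ohm1_cyclic_pgroup_prime cC pC ntC).
  by rewrite (Ohm1_cyclic_pgroup_prime (cycle_cyclic x) (pgroupS sxC pC) ntx).
exact: Ohm_sub.
Qed.

(* A cyclic p-group of permutations acts semiregularly on the points moved
   by its subgroup of order p; so a nontrivial element w moves at least
   #|C| points. *)
Lemma card_cyclic_le_support (T : finType) (p : nat) (C : {group {perm T}})
    (w : {perm T}) :
  prime p -> cyclic C -> p.-group C -> w \in C -> w != 1 ->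
  (#|C| <= #|[set q | w q != q]|)%N.
Proof.
move=> pr_p cC pC wC w1.
have ntC : C :!=: 1 by apply/trivgPn; exists w.
have [u uO u1] : exists2 u, u \in 'Ohm_1(C) & u != 1.
  by apply/trivgPn; rewrite -cardG_gt1 (Ohm1_cyclic_pgroup_prime cC pC ntC) prime_gt1.
have u_in z : z \in C -> z != 1 -> u \in <[z]>.
  by move=> zC z1; apply: (subsetP (Ohm1_sub_cycle cC pC zC z1)).
have [q0 uq0] := perm_moves u1.
have inj_orbit : {in C &, injective (fun z : {perm T} => z q0)}.
  move=> z1 z2 z1C z2C /= e; apply/eqP; rewrite eq_mulgV1; apply: contraTT uq0 => z12.
  rewrite negbK; apply/eqP; apply: (@cycle_fix _ (z1 * z2^-1)); last by apply: u_in; rewrite ?groupM ?groupV.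
  by rewrite permM e -permM mulgV perm1.
rewrite -(card_in_imset inj_orbit); apply/subset_leq_card/subsetP => _ /imsetP[z zC ->].
rewrite inE; apply: contra uq0 => /eqP wz.
have uz : u (z q0) = z q0 by apply: cycle_fix wz (u_in w wC w1).
have uC : u \in C := subsetP (Ohm_sub 1 C) u uO.
have czu : commute z u by apply: (centsP (cyclic_abelian cC)).
by move: uz; rewrite -permM czu permM => /perm_inj->.
Qed.

Lemma metacyclicJ (gT : finGroupType) (D : {group gT}) (x : gT) :
  metacyclic D -> metacyclic (D :^ x).
Proof.
case/metacyclicP => K [cK nKD qK]; apply/metacyclicP; exists (K :^ x)%G.
rewrite cyclicJ normalJ; split=> //.
have := morphim_cyclic (quotm_morphism (conjgm_morphism D x) nKD) qK.
by rewrite morphim_quotm /= !morphim_conj setIid (setIidPr (normal_sub nKD)).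
Qed.

Section ExponentInMetacyclic.
Variables (gT : finGroupType) (p : nat) (D K : {group gT}).
Hypotheses (pr_p : prime p) (pD : p.-group D) (nKD : K <| D) (cDK : cyclic (D / K)).

Lemma card_Ohm1_quotient_le : (#|'Ohm_1(D / K)| <= p)%N.
Proof.
have [-> | ntQ] := eqVneq (D / K) 1; last first.
  by rewrite (Ohm1_cyclic_pgroup_prime cDK (quotient_pgroup K pD) ntQ).
by apply: leq_trans (subset_leq_card (Ohm_sub 1 1%G)) _; rewrite cards1 prime_gt0.
Qed.

Lemma coset_exponent_Ohm1 b : b \in D -> b ^+ p = 1 -> coset K b \in 'Ohm_1(D / K).
Proof.
move=> bD bp; have bN : b \in 'N(K) := subsetP (normal_norm nKD) b bD.
rewrite (OhmE 1 (quotient_pgroup K pD)); apply: mem_gen.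
by rewrite !inE mem_quotient //= expn1 -morphX // bp morph1 eqxx.
Qed.

Lemma card_exponent_le (W : {set gT}) :
  W \subset D -> {in W, forall b, b ^+ p = 1} -> (#|W| <= #|K| * p)%N.
Proof.
move=> sWD Wp; have sOhmN : 'Ohm_1(D / K) \subset coset K @* 'N(K).
  by apply: subset_trans (Ohm_sub 1 _) _; apply/morphimS/normal_norm.
have sWpre : W \subset coset K @*^-1 'Ohm_1(D / K).
  apply/subsetP => b bW; have bD := subsetP sWD b bW.
  by rewrite mem_morphpre ?coset_exponent_Ohm1 ?Wp // (subsetP (normal_norm nKD)).
apply: leq_trans (subset_leq_card sWpre) _.
by rewrite card_morphpre // ker_coset leq_mul2l card_Ohm1_quotient_le orbT.
Qed.

Lemma exponent_same_coset (Y : {set gT}) :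
  Y \subset D -> {in Y, forall b, b ^+ p = 1} -> (p < #|Y|)%N ->
  exists y1, exists2 y2, [/\ y1 \in Y, y2 \in Y & y1 != y2] & y1 * y2^-1 \in K.
Proof.
move=> sYD Yp card_Y; have yN y : y \in Y -> y \in 'N(K).
  by move=> yY; apply: (subsetP (normal_norm nKD)); apply: (subsetP sYD).
have /dinjectivePn[y1 y1Y [y2 /andP[ne y2Y] e]] : ~~ dinjectiveb (coset K) Y.
  apply: contraTN card_Y => /dinjectiveP/card_in_imset <-; rewrite -leqNgt.
  apply: leq_trans card_Ohm1_quotient_le; apply/subset_leq_card/subsetP.
  by move=> _ /imsetP[y yY ->]; rewrite coset_exponent_Ohm1 ?Yp ?(subsetP sYD).
exists y1, y2; first by rewrite y1Y y2Y eq_sym.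
by rewrite -mem_rcoset; apply/rcoset_kercosetP; rewrite ?yN.
Qed.
End ExponentInMetacyclic.

Lemma card_ord_below (N M : nat) : (#|[set q : 'I_N | (q < M)%N]| <= M)%N.
Proof.
rewrite cardE -(size_map val) -[leqRHS](size_iota 0 M); apply: uniq_leq_size.
  by rewrite (map_inj_uniq val_inj) enum_uniq.
by move=> x /mapP[q]; rewrite mem_enum inE mem_iota => qM ->.
Qed.

(* The heart of the argument at a fixed level: if a metacyclic D absorbed all
   but one double coset, the p+1 conjugates in Y (supported below M) and the
   more than M * p conjugates in Z would fit in one conjugate D :^ x0 = K.Q;
   two elements of Y share a K-coset, so K embeds in the support of their
   quotient, #|K| <= M, and then #|Z| <= #|K| * p <= M * p. *)
Lemma many_split_dcosets (N p M : nat) (Gn D : {group {perm 'I_N}})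
    (a : {perm 'I_N}) (Y Z : {set {perm 'I_N}}) :
  prime p -> p.-group Gn -> D \subset Gn -> metacyclic D -> #[a] = p ->
  Y \subset a ^: Gn -> Z \subset a ^: Gn -> {in Y, forall y, supported_below M y} ->
  (p < #|Y|)%N -> (M * p < #|Z|)%N -> ((#|Y| + #|Z|) * (#|D| * p) < #|Gn|)%N ->
  (1 < S_split Gn D <[a]>)%N.
Proof.
move=> pr_p pG sDG mD o_a sY sZ Ysupp card_Y card_Z card_G.
rewrite ltnNge; apply/negP => split_le1; have pr_a : prime #[a] by rewrite o_a.
have sW : Y :|: Z \subset a ^: Gn by rewrite subUset sY sZ.
have [x0 x0G sWD] : exists2 x0, x0 \in Gn & Y :|: Z \subset D :^ x0.
  apply: common_conjugate pr_a split_le1 sW _; rewrite o_a.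
  by apply: leq_ltn_trans card_G; rewrite leq_mul2r cardsU leq_subr orbT.
have pDx : p.-group (D :^ x0) by apply: pgroupS pG; rewrite -(conjGid x0G) conjSg.
have [K [cK nKD cQ]] := metacyclicP (metacyclicJ x0 mD).
have Wp : {in Y :|: Z, forall b, b ^+ p = 1}.
  by move=> b /(subsetP sW)/imsetP[t _ ->]; rewrite -conjXg -o_a expg_order conj1g.
have [y1 [y2 [y1Y y2Y ne_y] yK]] := exponent_same_coset pr_p pDx nKD cQ
  (subset_trans (subsetUl Y Z) sWD) (sub_in1 (subsetP (subsetUl Y Z)) Wp) card_Y.
have card_K : (#|K| <= M)%N.
  have pK : p.-group K := pgroupS (normal_sub nKD) pDx.
  have y12 : y1 * y2^-1 != 1 by rewrite -eq_mulgV1.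
  apply: leq_trans (card_cyclic_le_support pr_p cK pK yK y12) _.
  apply: leq_trans (card_ord_below N M); apply/subset_leq_card/subsetP => q.
  rewrite !inE; apply: contraR; rewrite -leqNgt => Mq.
  by rewrite permM (Ysupp _ y1Y q Mq) -{1}(Ysupp _ y2Y q Mq) permK.
have := card_exponent_le pr_p pDx nKD cQ sWD Wp.
apply/negP; rewrite -ltnNge; apply: leq_ltn_trans (leq_mul card_K (leqnn p)) _.
exact: leq_trans card_Z (subset_leq_card (subsetUr Y Z)).
Qed.

Lemma metacyclic_le_max (gT : finGroupType) (Gn D : {group gT}) :
  D \subset Gn -> metacyclic D -> (#|D| <= max_metacyclic Gn)%N.
Proof.
move=> sDG mD; apply: (@leq_bigmax_cond _
  (fun H : {group gT} => (H \subset Gn) && metacyclic H) (fun H => #|H|) D).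
by rewrite sDG mD.
Qed.

Theorem mainTheorem13 (l : nat) (G : forall n : nat, {group {perm 'I_(l ^ n)}})
  (k : nat) (alpha : {perm 'I_(l ^ k)}) :
  prime l ->
  (forall n, l.-group (G n)) ->
  (forall n (s : {perm 'I_(l ^ n)}), s \in G n ->
     exists2 t : {perm 'I_(l ^ n.+1)}, t \in G n.+1 & sinf t =1 sinf s) ->
  alpha \in G k -> #[alpha] = l ->
  (forall M : nat, exists N : nat, forall n, (N <= n)%N ->
     (M * max_metacyclic (G n) < #|G n|)%N) ->
  infinitely_many_conj G alpha ->
  exists N : nat, forall n, (N <= n)%N ->
    forall (a : {perm 'I_(l ^ n)}), a \in G n -> sinf a =1 sinf alpha ->
    forall D : {group {perm 'I_(l ^ n)}}, D \subset G n -> metacyclic D ->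
      (1 < S_split (G n) D <[a]>)%N.
Proof.
move=> pr_l pG G_nested _ o_alpha card_growth hinf.
have l_gt0 := prime_gt0 pr_l.
have [m0 Yex] := many_small_conjugates l_gt0 G_nested hinf l.+1.
have [m1 Zex] := many_small_conjugates l_gt0 G_nested hinf (l ^ m0 * l).+1.
have [N1 growth] := card_growth ((l.+1 + (l ^ m0 * l).+1) * l)%N.
exists (maxn N1 (maxn m0 m1)) => n; rewrite !geq_max => /and3P[le_N1 le_m0 le_m1].
move=> a _ ea D sDG mD; have o_a : #[a] = l by rewrite (sinf_order ea).
have [Y [card_Y sY Ysupp]] := Yex n le_m0 a ea.
have [Z [card_Z sZ _]] := Zex n le_m1 a ea.
apply: (many_split_dcosets pr_l (pG n) sDG mD o_a sY sZ Ysupp); rewrite ?card_Y ?card_Z //.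
apply: leq_ltn_trans (growth n le_N1).
by rewrite -mulnA [(#|D| * l)%N]mulnC leq_mul // leq_mul // metacyclic_le_max.
Qed.
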